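(* Let $p$ be a prime, $m\geq 1$, and $1\leq r_1<r_2<\dots<r_m$ integers. Let $F(x)=(x-1)\Phi_{p^{r_1}}(x)\Phi_{p^{r_2}}(x)\cdots\Phi_{p^{r_m}}(x)$. If $E$ is a set of roots of $F$ such that $F(\epsilon/\epsilon')=0$ for all $\epsilon,\epsilon'\in E$, then $\#E\leq p^m$.
   Context: $\Phi_s(x)$ denotes the $s$-th cyclotomic polynomial. *)

From mathcomp Require Import all_boot all_order all_algebra all_field.
Set Implicit Arguments. Unset Strict Implicit. Unset Printing Implicit Defensive.
Import Order.TTheory GRing.Theory Num.Theory.
Local Open Scope ring_scope.

Definition Fpoly (p : nat) (rs : seq nat) : {poly algC} :=
  ('X - 1) * \prod_(r <- rs) map_poly (intr : int -> algC) ('Phi_(p ^ r)%N).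

From mathcomp Require Import all_boot all_order all_algebra all_field.
Set Implicit Arguments. Unset Strict Implicit. Unset Printing Implicit Defensive.
Import Order.TTheory GRing.Theory Num.Theory.
Local Open Scope ring_scope.

(* The roots of F other than 1 are the primitive p^r-th roots of unity, so any
   two distinct elements of E have a ratio of order p^r for some r in rs.  We
   bound such sets by induction on the number of exponents.  Let M be the
   largest exponent and send e to e^(p^(M-1)).  Two elements with the same
   image have a ratio of order dividing p^(M-1), so each fibre only uses the
   exponents other than M and has at most p^(m-1) elements by induction.  All
   ratios have order dividing p^M, so the images y all satisfy
   y^p = e0^(p^M) for a fixed e0 in E: there are at most p of them. *)

Lemma bigmax_seq_mem (rs : seq nat) : rs != [::] -> (\max_(r <- rs) r)%N \in rs.
Proof.
elim: rs => // a s IH _; rewrite big_cons inE.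
have [->|s_n0] := eqVneq s [::]; first by rewrite big_nil maxn0 eqxx.
by rewrite /maxn; case: ltnP => _; rewrite ?eqxx ?IH ?orbT.
Qed.

Lemma size_sum_fibres (T U : eqType) (f : T -> U) (s : seq T) (I : seq U) :
  uniq I -> {subset map f s <= I} ->
  size s = (\sum_(y <- I) count (fun x => f x == y) s)%N.
Proof.
move=> uI; elim: s => [|x s IH] sub /=; first by rewrite big1.
rewrite big_split /= -IH; last by move=> y s_y; apply: sub; rewrite inE s_y orbT.
rewrite (bigD1_seq (f x)) //=; last by apply: sub; rewrite inE eqxx.
by rewrite eqxx big1 // => y /negPf; rewrite eq_sym => ->.
Qed.

Lemma size_le_fibres (T U : eqType) (f : T -> U) (s : seq T) b :
  (forall y, count (fun x => f x == y) s <= b)%N ->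
  (size s <= size (undup (map f s)) * b)%N.
Proof.
move=> fibre_b.
have sub : {subset map f s <= undup (map f s)} by move=> y; rewrite mem_undup.
rewrite (size_sum_fibres (undup_uniq _) sub).
apply: (@leq_trans (\sum_(y <- undup (map f s)) b)); first exact: leq_sum.
by rewrite big_const_seq count_predT iter_addn_0 mulnC.
Qed.

Lemma size_roots_XnsubC (R : idomainType) n (c : R) (s : seq R) :
  (0 < n)%N -> uniq s -> all (fun y => y ^+ n == c) s -> (size s <= n)%N.
Proof.
move=> n_gt0 us /allP sc; rewrite -ltnS -(size_XnsubC c n_gt0).
apply: max_poly_roots => //; first by rewrite -size_poly_eq0 size_XnsubC.
by apply/allP => y /sc; rewrite /root !hornerE subr_eq0.
Qed.

Lemma prim_root_div_denom_neq0 (K : fieldType) n (e e' : K) :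
  n.-primitive_root (e / e') -> e' != 0.
Proof.
move=> prim; have := prim_order_gt0 prim; rewrite lt0n -(prim_root_eq0 prim).
by apply: contraNneq => ->; rewrite invr0 mulr0.
Qed.

Lemma root_Cyclotomic n (z : algC) :
  (0 < n)%N -> root (map_poly intr 'Phi_n) z = n.-primitive_root z.
Proof.
move=> n_gt0; have [w prim_w] := C_prim_root_exists n_gt0.
by rewrite (Cintr_Cyclotomic prim_w) (root_cyclotomic prim_w).
Qed.

Lemma root_prod_Cyclotomic (I : eqType) (rs : seq I) (d : I -> nat) (z : algC) :
  {in rs, forall r, 0 < d r}%N ->
  root (\prod_(r <- rs) map_poly intr 'Phi_(d r)) z ->
  exists2 r, r \in rs & (d r).-primitive_root z.
Proof.
elim: rs => [|r rs IH] d_gt0; first by rewrite big_nil (negPf (root1 z)).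
rewrite big_cons rootM => /orP[root_r|root_rs].
  by exists r; rewrite ?inE ?eqxx // -root_Cyclotomic ?d_gt0 ?inE ?eqxx.
have [|s rs_s prim_s] := IH _ root_rs; first by move=> s rs_s; apply/d_gt0/predU1r.
by exists s => //; apply: predU1r.
Qed.

Section PrimePowerRatios.
Variables (K : fieldType) (p : nat).
Hypothesis p_gt1 : (1 < p)%N.

Definition prime_power_ratios (rs : seq nat) (E : seq K) :=
  {in E &, forall e e', e != e' ->
    exists2 r, r \in rs & (p ^ r)%N.-primitive_root (e / e')}.

Lemma prime_power_ratios_nil (E : seq K) :
  uniq E -> prime_power_ratios [::] E -> (size E <= 1)%N.
Proof.
case: E => [|e [|e' E]] //= /andP[]; rewrite inE negb_or => /andP[ne _] _.
by move=> /(_ e e'); rewrite !inE !eqxx orbT => /(_ isT isT ne) [].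
Qed.

Lemma prime_power_ratios_fibre rs (E : seq K) M y : (0 < M)%N ->
  prime_power_ratios rs E ->
  prime_power_ratios (filter (predC1 M) rs) [seq e <- E | e ^+ (p ^ M.-1) == y].
Proof.
move=> M_gt0 ratE e e'; rewrite !mem_filter => /andP[/eqP ey E_e] /andP[/eqP e'y E_e'] ne.
have [r rs_r prim_r] := ratE e e' E_e E_e' ne.
exists r => //; rewrite mem_filter rs_r andbT /=.
have e'_n0 := prim_root_div_denom_neq0 prim_r.
have : (e / e') ^+ (p ^ M.-1) == 1.
  by rewrite expr_div_n ey -e'y divff // expf_neq0.
rewrite -(prim_order_dvd prim_r) dvdn_Pexp2l //; apply: contraTneq => ->.
by rewrite -ltnNge ltn_predL.
Qed.

Lemma prime_power_ratios_image rs (E : seq K) M : (0 < M)%N ->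
  {in rs, forall r, r <= M}%N -> prime_power_ratios rs E ->
  (size (undup [seq e ^+ (p ^ M.-1) | e <- E]) <= p)%N.
Proof.
move=> M_gt0 le_M ratE; case E_e0: E => [|e0 E'] //.
have E0 : e0 \in E by rewrite E_e0 inE eqxx.
have exp_eq e : e \in E -> e ^+ (p ^ M) = e0 ^+ (p ^ M).
  move=> E_e; have [-> //|ne] := eqVneq e e0.
  have [r /le_M le_rM prim_r] := ratE e e0 E_e E0 ne.
  have e0_n0 := prim_root_div_denom_neq0 prim_r.
  have : (e / e0) ^+ (p ^ M) == 1.
    by rewrite -(prim_order_dvd prim_r) dvdn_exp2l.
  by rewrite expr_div_n (can2_eq (divfK _) (mulfK _)) ?expf_neq0 // mul1r => /eqP.
apply: (@size_roots_XnsubC _ _ (e0 ^+ (p ^ M))); rewrite ?undup_uniq ?(ltnW p_gt1) //.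
apply/allP => y; rewrite mem_undup -E_e0 => /mapP[e E_e ->].
by rewrite -exprM -expnSr prednK // exp_eq.
Qed.

Lemma size_prime_power_ratios rs (E : seq K) :
  uniq E -> {in rs, forall r, 0 < r}%N -> prime_power_ratios rs E ->
  (size E <= p ^ size rs)%N.
Proof.
suff bound n : forall rs E, (size rs <= n)%N -> uniq E ->
    {in rs, forall r, 0 < r}%N -> prime_power_ratios rs E -> (size E <= p ^ n)%N.
  by apply: bound.
elim: n => [|n IH] {}rs {}E size_rs uE rs_gt0 ratE.
  by move: size_rs ratE; rewrite leqn0 size_eq0 => /eqP ->; apply: prime_power_ratios_nil.
have [rs0|rs_n0] := eqVneq rs [::].
  rewrite rs0 in ratE.
  by rewrite (leq_trans (prime_power_ratios_nil uE ratE)) ?expn_gt0 ?(ltnW p_gt1).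
set M := (\max_(r <- rs) r)%N.
have rs_M : M \in rs := bigmax_seq_mem rs_n0.
have le_M r : r \in rs -> (r <= M)%N by move=> rs_r; apply: leq_bigmax_seq.
have M_gt0 := rs_gt0 M rs_M.
have size_rs' : (size (filter (predC1 M) rs) <= n)%N.
  rewrite -ltnS (leq_trans _ size_rs) // size_filter ltn_neqAle count_size andbT.
  by rewrite -all_count; apply/allPn; exists M; rewrite /= ?eqxx.
have fibre_bound y : (count (fun e => e ^+ (p ^ M.-1) == y) E <= p ^ n)%N.
  rewrite -size_filter; apply: (IH (filter (predC1 M) rs)) => //.
  - exact: filter_uniq.
  - by move=> r; rewrite mem_filter => /andP[_ /rs_gt0].
  - exact: prime_power_ratios_fibre M_gt0 ratE.
rewrite expnS (leq_trans (size_le_fibres fibre_bound)) // leq_mul2r.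
by rewrite (prime_power_ratios_image M_gt0 le_M ratE) orbT.
Qed.

End PrimePowerRatios.

Theorem mainTheorem4 (p m : nat) (rs : seq nat) (E : seq algC) :
  prime p -> (1 <= m)%N -> size rs = m ->
  all (fun r => 1 <= r)%N rs -> sorted ltn rs ->
  uniq E ->
  (forall e, e \in E -> root (Fpoly p rs) e) ->
  (forall e e', e \in E -> e' \in E -> root (Fpoly p rs) (e / e')) ->
  (size E <= p ^ m)%N.
Proof.
move=> p_pr _ <- /allP rs_gt0 _ uE _ root_ratio.
apply: size_prime_power_ratios (prime_gt1 p_pr) _ _ uE _ _ => //.
move=> e e' E_e E_e' ne; move: (root_ratio e e' E_e E_e').
rewrite /Fpoly rootM root_XsubC => /orP[/eqP/divr1_eq/eqP|]; first by rewrite (negPf ne).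
by apply: root_prod_Cyclotomic => r _; rewrite expn_gt0 prime_gt0.
Qed.
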